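(* Let $L$ be a multisorted algebra in the positive existential signature satisfying axioms (1), (2), (7), (9). Let $F$ be a prime filter on sort $n$ of $L$ and let $r$ be an element of sort $n+1$ with $\exists(r)\in F$. Then there is a prime filter $G$ on sort $n+1$ such that $r\in G$ and for all $u$ of sort $n$, $c(u)\in G$ if and only if $u\in F$, where $c\colon n\to n+1$ is the associated cylindrification.
   Context: The Boolean prime ideal theorem is assumed. Signature. There is a sort $n$ for each $n\ge0$. For every function $\alpha\colon\{1,\dots,n\}\to\{1,\dots,k\}$ there is a unary function symbol (''substitution'') $\alpha\colon n\to k$ (argument of sort $n$, value of sort $k$). Each sort has $0,1,\vee,\wedge$; for each $n$ there is $\exists\colon n+1\to n$ (positive existential signature). The associated cylindrification of $\exists\colon n+1\to n$ is the substitution $c\colon n\to n+1$ given by $c(i)=i$. Axioms: (1) each sort is a bounded distributive lattice under $0,1,\vee,\wedge$; (2) substitutions preserve $0,1,\vee,\wedge$; (7) $\exists(0)=0$ and $\exists(r\vee s)=\exists(r)\vee\exists(s)$; (9) $\exists(r\wedge c(s))=\exists(r)\wedge s$ for all $r$ of sort $n+1$, $s$ of sort $n$. A prime filter is a proper, nonempty, upward-closed, $\wedge$-closed subset of a sort with $x\vee y\in F\Rightarrow x\in F$ or $y\in F$. *)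

From mathcomp Require Import all_boot.
Set Implicit Arguments. Unset Strict Implicit. Unset Printing Implicit Defensive.

(* Sorts are indexed by n : nat; the index set {1,...,n} is rendered as 'I_n
   (0-based), so a substitution alpha : n -> k is a function 'I_n -> 'I_k. *)
Record PosExSig := {
  car  : nat -> Type;
  zero : forall n, car n;
  one  : forall n, car n;
  join : forall n, car n -> car n -> car n;
  meet : forall n, car n -> car n -> car n;
  subst : forall n k, ('I_n -> 'I_k) -> car n -> car k;
  ex   : forall n, car n.+1 -> car n
}.

Arguments zero {A} n : rename.
Arguments one {A} n : rename.
Arguments join {A n} : rename.
Arguments meet {A n} : rename.
Arguments subst {A n k} : rename.
Arguments ex {A n} : rename.

Definition cyl (n : nat) : 'I_n -> 'I_n.+1 := widen_ord (leqnSn n).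
Arguments cyl n _ : clear implicits.

Section Laws.
Variable A : PosExSig.

Definition bdl_axiom : Prop := forall n : nat,
  (forall x y z : car A n, join x (join y z) = join (join x y) z) /\
  (forall x y z : car A n, meet x (meet y z) = meet (meet x y) z) /\
  (forall x y : car A n, join x y = join y x) /\
  (forall x y : car A n, meet x y = meet y x) /\
  (forall x y : car A n, join x (meet x y) = x) /\
  (forall x y : car A n, meet x (join x y) = x) /\
  (forall x y z : car A n, meet x (join y z) = join (meet x y) (meet x z)) /\
  (forall x : car A n, join x (zero n) = x) /\
  (forall x : car A n, meet x (one n) = x).

Definition subst_axiom : Prop := forall n k (a : 'I_n -> 'I_k),
  subst a (zero (A:=A) n) = zero k /\ subst a (one (A:=A) n) = one k /\
  (forall x y : car A n, subst a (join x y) = join (subst a x) (subst a y)) /\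
  (forall x y : car A n, subst a (meet x y) = meet (subst a x) (subst a y)).

Definition ex_join_axiom : Prop := forall n,
  ex (zero (A:=A) n.+1) = zero n /\
  (forall r s : car A n.+1, ex (join r s) = join (ex r) (ex s)).

Definition frobenius_axiom : Prop := forall n (r : car A n.+1) (s : car A n),
  ex (meet r (subst (cyl n) s)) = meet (ex r) s.

Definition le n (x y : car A n) : Prop := meet x y = x.

Definition prime_filter n (F : car A n -> Prop) : Prop :=
  (exists x, ~ F x) /\
  (exists x, F x) /\
  (forall x y, le x y -> F x -> F y) /\
  (forall x y, F x -> F y -> F (meet x y)) /\
  (forall x y, F (join x y) -> F x \/ F y).

End Laws.

(* Write c for the cylindrification. The elements lying below some c(v) with
   v outside F form an ideal, since F is prime and c preserves joins. By
   Frobenius reciprocity this ideal is disjoint from the filter generated by r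
   and c(F): if r /\ c(u) <= c(v) with u in F, then
   ex(r) /\ u = ex(r /\ c(u)) <= ex(c(v)) <= v, so v is in F. The prime filter
   theorem, proved from Zorn's lemma, extends that filter to a prime filter G
   avoiding the ideal; then c(u) is in G exactly when u is in F. *)

From Pilot Require Import Defs.
From mathcomp Require Import all_boot.
From mathcomp Require Import boolp classical_sets.
Set Implicit Arguments. Unset Strict Implicit. Unset Printing Implicit Defensive.
Local Open Scope classical_set_scope.

Lemma Zorn_above T (P : set (set T)) (X0 : set T) : P X0 ->
  (forall F, F `<=` P -> total_on F subset -> F !=set0 ->
     P (\bigcup_(X in F) X)) ->
  exists M, [/\ P M, X0 `<=` M & forall B, P B -> M `<=` B -> B `<=` M].
Proof.
move=> PX0 Pchain.
have [|A [PA Amax]] := Zorn_bigcup (P := fun X => P (X0 `|` X)).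
  move=> F FP Ftot; have [->|/set0P[Z FZ]] := eqVneq F set0.
    by rewrite bigcup_set0 setU0.
  suff -> : X0 `|` \bigcup_(X in F) X =
            \bigcup_(Y in [set X0 `|` X | X in F]) Y.
    apply: Pchain; first by move=> _ [X FX <-]; exact: FP.
      move=> _ _ [X1 FX1 <-] [X2 FX2 <-].
      by case: (Ftot _ _ FX1 FX2) => sub; [left|right]; apply: setUS.
    by exists (X0 `|` Z), Z.
  apply/seteqP; split => x.
    case=> [X0x|[Y FY Yx]]; first by exists (X0 `|` Z); [exists Z | left].
    by exists (X0 `|` Y); [exists Y | right].
  by move=> [_ [Y FY <-] [X0x|Yx]]; [left | right; exists Y].
exists (X0 `|` A); split => [//|x|B PB AB]; first by left.
have X0B : X0 `|` B = B by apply/setUidPr => x X0x; apply: AB; left.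
have [BA|nBA] := pselect (B `<=` A); first by move=> x /BA; right.
by exfalso; apply: (Amax B) => //; [split => // x Ax; apply: AB; right | rewrite X0B].
Qed.

Section PositiveExistentialAlgebra.
Variable A : PosExSig.
Hypotheses (bdlA : bdl_axiom A) (substA : subst_axiom A).
Hypotheses (exA : ex_join_axiom A) (frobA : frobenius_axiom A).
Implicit Types n : nat.

Lemma meetxx n (x : car A n) : meet x x = x.
Proof.
have [_ [_ [_ [_ [joinKI [meetKU _]]]]]] := bdlA n.
by rewrite -{2}(joinKI x x) meetKU.
Qed.

Lemma meetC n (x y : car A n) : meet x y = meet y x.
Proof. by have [_ [_ [_ [-> _]]]] := bdlA n. Qed.

Lemma meetA n (x y z : car A n) : meet x (meet y z) = meet (meet x y) z.
Proof. by have [_ [-> _]] := bdlA n. Qed.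

Lemma joinC n (x y : car A n) : join x y = join y x.
Proof. by have [_ [_ [-> _]]] := bdlA n. Qed.

Lemma le_refl n (x : car A n) : le x x.
Proof. exact: meetxx. Qed.

Lemma le_trans n (y x z : car A n) : le x y -> le y z -> le x z.
Proof. by rewrite /le => xy yz; rewrite -xy -meetA yz. Qed.

Lemma le_meetl n (x y : car A n) : le (meet x y) x.
Proof. by rewrite /le meetC meetA meetxx. Qed.

Lemma le_meetr n (x y : car A n) : le (meet x y) y.
Proof. by rewrite /le -meetA meetxx. Qed.

Lemma le_meet n (x y z : car A n) : le z x -> le z y -> le z (meet x y).
Proof. by rewrite /le meetA => -> ->. Qed.

Lemma le_meet2 n (x y x' y' : car A n) :
  le x x' -> le y y' -> le (meet x y) (meet x' y').
Proof.
move=> xx' yy'; apply: le_meet.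
  exact: le_trans (le_meetl x y) xx'.
exact: le_trans (le_meetr x y) yy'.
Qed.

Lemma le_joinl n (x y : car A n) : le x (join x y).
Proof. by have [_ [_ [_ [_ [_ [meetKU _]]]]]] := bdlA n; apply: meetKU. Qed.

Lemma le_joinr n (x y : car A n) : le y (join x y).
Proof. rewrite joinC; exact: le_joinl. Qed.

Lemma le_join n (x y z : car A n) : le x z -> le y z -> le (join x y) z.
Proof.
have [_ [_ [_ [_ [_ [_ [meetUr _]]]]]]] := bdlA n.
by rewrite /le => xz yz; rewrite meetC meetUr (meetC z x) (meetC z y) xz yz.
Qed.

Lemma meet1x n (x : car A n) : meet (Defs.one n) x = x.
Proof. by rewrite meetC; have [_ [_ [_ [_ [_ [_ [_ [_ ->]]]]]]]] := bdlA n. Qed.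

Lemma meet_join_le n (x y a b : car A n) :
  le (meet (join x y) (meet a b)) (join (meet x a) (meet y b)).
Proof.
have [_ [_ [_ [_ [_ [_ [meetUr _]]]]]]] := bdlA n.
rewrite meetC meetUr; apply: le_join; rewrite meetC.
  exact: le_trans (le_meet2 (le_refl x) (le_meetl a b)) (le_joinl _ _).
exact: le_trans (le_meet2 (le_refl y) (le_meetr a b)) (le_joinr _ _).
Qed.

Definition is_filter n (G : set (car A n)) :=
  (forall x y, le x y -> G x -> G y) /\ (forall x y, G x -> G y -> G (meet x y)).

Definition is_ideal n (I : set (car A n)) :=
  (forall x y, le x y -> I y -> I x) /\ (forall x y, I x -> I y -> I (join x y)).

Definition meet_closure n (G : set (car A n)) (x : car A n) : set (car A n) :=
  [set z | exists2 m, G m & le (meet x m) z].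

Lemma filter_meet_closure n (G : set (car A n)) x :
  is_filter G -> is_filter (meet_closure G x).
Proof.
move=> [_ Gmeet]; split.
  by move=> y z yz [m Gm xmy]; exists m => //; exact: le_trans xmy yz.
move=> y z [m Gm xmy] [m' Gm' xm'z]; exists (meet m m'); first exact: Gmeet.
apply: le_meet.
  exact: le_trans (le_meet2 (le_refl x) (le_meetl m m')) xmy.
exact: le_trans (le_meet2 (le_refl x) (le_meetr m m')) xm'z.
Qed.

Lemma sub_meet_closure n (G : set (car A n)) x : G `<=` meet_closure G x.
Proof. by move=> m Gm; exists m => //; exact: le_meetr. Qed.

Lemma meet_closure_id n (G : set (car A n)) x : G !=set0 -> meet_closure G x x.
Proof. by move=> [m Gm]; exists m => //; exact: le_meetl. Qed.

Lemma filter_bigcup_chain n (C : set (set (car A n))) :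
  (forall G, C G -> is_filter G) -> total_on C subset ->
  is_filter (\bigcup_(G in C) G).
Proof.
move=> Cfilter Ctot; split.
  by move=> x y xy [G CG Gx]; exists G => //; exact: (Cfilter G CG).1 xy Gx.
move=> x y [G CG Gx] [G' CG' G'y].
have [GG'|G'G] := Ctot _ _ CG CG'.
  by exists G' => //; apply: (Cfilter G' CG').2 => //; exact: GG'.
by exists G => //; apply: (Cfilter G CG).2 => //; exact: G'G.
Qed.

Lemma prime_filter_extension n (G0 I : set (car A n)) :
  is_filter G0 -> is_ideal I -> G0 !=set0 -> I !=set0 ->
  (forall x, G0 x -> ~ I x) ->
  exists G, [/\ prime_filter G, G0 `<=` G & forall x, G x -> ~ I x].
Proof.
move=> G0filter [Idown Ijoin] G0n0 [i Ii] G0I.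
pose P G := is_filter G /\ forall x, G x -> ~ I x.
have [|M [[Mfilter MI] G0M Mmax]] := Zorn_above (P := P) (conj G0filter G0I).
  move=> C CP Ctot _; split; first by apply: filter_bigcup_chain => // G /CP[].
  by move=> x [G /CP[_ GI] Gx]; exact: GI.
have [Mup Mmeet] := Mfilter.
(* By maximality, a point outside [M] generates with [M] a filter that meets [I]. *)
have escape x : ~ M x -> exists2 m, M m & exists2 j, I j & le (meet x m) j.
  apply: contra_notP => noescape; apply: (Mmax _ _ (sub_meet_closure x)).
    split; first exact: filter_meet_closure.
    by move=> z [m Mm xmz] Iz; apply: noescape; exists m => //; exists z.
  by apply: meet_closure_id; case: G0n0 => g /G0M; exists g.
exists M; split => //; split; first by exists i => /MI.
split; first by case: G0n0 => g /G0M; exists g.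
do 2!split => //.
move=> x y Mxy; have [Mx|nMx] := pselect (M x); first by left.
have [My|nMy] := pselect (M y); first by right.
have [m Mm [j Ij xmj]] := escape x nMx.
have [m' Mm' [j' Ij' ym'j']] := escape y nMy.
exfalso; apply: (MI _ (Mmeet _ _ Mxy (Mmeet _ _ Mm Mm'))).
apply: Idown (Ijoin _ _ Ij Ij').
have xj := le_trans xmj (le_joinl j j').
exact: le_trans (meet_join_le x y m m') (le_join xj (le_trans ym'j' (le_joinr j j'))).
Qed.

Lemma ex_le n (x y : car A n.+1) : le x y -> le (ex x) (ex y).
Proof.
have [_ [_ [_ [_ [joinKI _]]]]] := bdlA n.+1; have [_ exU] := exA n.
move=> xy; rewrite -[y](joinKI y x) meetC xy exU; exact: le_joinr.
Qed.

Lemma ex_subst_cyl_le n (v : car A n) : le (ex (subst (cyl n) v)) v.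
Proof. rewrite -(meet1x (subst _ v)) frobA; exact: le_meetr. Qed.

Lemma frobenius_le n (r : car A n.+1) (u v : car A n) :
  le (meet r (subst (cyl n) u)) (subst (cyl n) v) -> le (meet (ex r) u) v.
Proof.
move=> /ex_le; rewrite frobA => le_ex.
exact: le_trans le_ex (ex_subst_cyl_le v).
Qed.

Definition up_image n k (a : 'I_n -> 'I_k) (F : set (car A n)) : set (car A k) :=
  [set z | exists2 u, F u & le (subst a u) z].

Definition down_image n k (a : 'I_n -> 'I_k) (J : set (car A n)) : set (car A k) :=
  [set z | exists2 v, J v & le z (subst a v)].

Lemma filter_up_image n k (a : 'I_n -> 'I_k) (F : set (car A n)) :
  is_filter F -> is_filter (up_image a F).
Proof.
have [_ [_ [_ substI]]] := substA a.
move=> [_ Fmeet]; split.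
  by move=> x y xy [u Fu ux]; exists u => //; exact: le_trans ux xy.
move=> x y [u Fu ux] [v Fv vy]; exists (meet u v); first exact: Fmeet.
by rewrite substI; exact: le_meet2.
Qed.

Lemma ideal_down_image n k (a : 'I_n -> 'I_k) (J : set (car A n)) :
  is_ideal J -> is_ideal (down_image a J).
Proof.
have [_ [_ [substU _]]] := substA a.
move=> [_ Jjoin]; split.
  by move=> x y xy [v Jv yv]; exists v => //; exact: le_trans xy yv.
move=> x y [u Ju xu] [v Jv yv]; exists (join u v); first exact: Jjoin.
rewrite substU; apply: le_join.
  exact: le_trans xu (le_joinl _ _).
exact: le_trans yv (le_joinr _ _).
Qed.

Lemma ideal_compl_prime_filter n (F : set (car A n)) :
  prime_filter F -> is_ideal (~` F).
Proof.
move=> [_ [_ [Fup [_ Fprime]]]]; split; first by move=> x y xy nFy /(Fup _ _ xy).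
by move=> x y nFx nFy /Fprime[].
Qed.

Lemma meet_closure_cyl_disjoint n (F : set (car A n)) (r : car A n.+1) :
  is_filter F -> F (ex r) -> forall z,
  meet_closure (up_image (cyl n) F) r z -> ~ down_image (cyl n) (~` F) z.
Proof.
move=> [Fup Fmeet] Fexr z [m [u Fu um] rmz] [v nFv zv]; apply: nFv.
apply: (Fup _ _ _ (Fmeet _ _ Fexr Fu)); apply: frobenius_le.
exact: le_trans (le_meet2 (le_refl r) um) (le_trans rmz zv).
Qed.

End PositiveExistentialAlgebra.

Theorem lemma4p11 (A : PosExSig)
  (H1 : bdl_axiom A) (H2 : subst_axiom A)
  (H7 : ex_join_axiom A) (H9 : frobenius_axiom A)
  (n : nat) (F : car A n -> Prop) (r : car A n.+1) :
  prime_filter F -> F (ex r) ->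
  exists G : car A n.+1 -> Prop,
    prime_filter G /\ G r /\
    (forall u : car A n, G (subst (cyl n) u) <-> F u).
Proof.
move=> Fprime Fexr; have [[w nFw] [[u0 Fu0] [Fup [Fmeet _]]]] := Fprime.
pose G0 := meet_closure (up_image (cyl n) F) r.
pose I := down_image (cyl n) (~` F).
have G0r : G0 r.
  by apply: (meet_closure_id H1); exists (subst (cyl n) u0), u0 => //; exact: le_refl.
have Iw : I (subst (cyl n) w) by exists w => //; exact: le_refl.
have [G [Gprime G0G GI]] := prime_filter_extension H1
  (filter_meet_closure H1 r (filter_up_image H1 H2 (cyl n) (conj Fup Fmeet)))
  (ideal_down_image H1 H2 (cyl n) (ideal_compl_prime_filter Fprime))
  (ex_intro _ r G0r) (ex_intro _ _ Iw)
  (meet_closure_cyl_disjoint H1 H7 H9 (conj Fup Fmeet) Fexr).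
exists G; split=> //; split; first exact: G0G.
move=> u; split => [Gcu|Fu].
  by apply: contra_notP (GI _ Gcu) => nFu; exists u => //; exact: le_refl.
by apply/G0G/(sub_meet_closure H1); exists u => //; exact: le_refl.
Qed.
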